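(* Let $\beta_0>0$, $M>0$, and let $(f_n)_{n\ge0}$ be a pointwise converging sequence of increasing differentiable functions $f_n:[0,\beta_0]\to[0,M]$ such that for all $n\ge1$, $$f_n'\ \ge\ \frac{n}{\Sigma_n}\,f_n,\qquad\text{where } \Sigma_n=\sum_{k=0}^{n-1}f_k .$$ Then there exists $\beta_1\in[0,\beta_0]$ such that: (P1) for every $\beta<\beta_1$ there exists $c_\beta>0$ such that $f_n(\beta)\le\exp(-c_\beta n)$ for all $n$ large enough; (P2) for every $\beta>\beta_1$ (with $\beta\le\beta_0$), the limit $f=\lim_{n\to\infty}f_n$ satisfies $f(\beta)\ge\beta-\beta_1$.
   Context: The differential inequality is assumed to hold pointwise on $[0,\beta_0]$ (in particular $\Sigma_n>0$ wherever it is used). *)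

From Stdlib Require Import Reals Lra Lia.
Open Scope R_scope.

(* g' is the derivative of g on the closed interval [a,b], in the sense of
   the derivative of the restriction of g to [a,b] (one-sided at endpoints). *)
Definition has_deriv_on (a b : R) (g g' : R -> R) : Prop :=
  forall x, a <= x <= b ->
  forall eps, 0 < eps -> exists delta, 0 < delta /\
    forall y, a <= y <= b -> y <> x -> Rabs (y - x) < delta ->
      Rabs ((g y - g x) / (y - x) - g' x) < eps.

Fixpoint Sigma (f : nat -> R -> R) (n : nat) (x : R) : R :=
  match n with
  | O => 0
  | S m => Sigma f m x + f m x
  end.

(* Comparing [f_n] with the solution of [g' = c g] turns the differential
   inequality into [f_n(x) exp (n (b - x) / Sigma_n(b)) <= f_n(b) <= M] for
   [x <= b].  Let [beta1] be the supremum of the points [b] at which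
   [Sigma_n(b) <= n^gam] eventually, for some [gam < 1].  Below such a [b] the
   exponential factor exceeds [n^2], so [f_n = O(n^-2)] and [Sigma_n] stays
   bounded, after which the same comparison yields exponential decay.  Above
   [beta1], summing [f_k'/k >= f_k/Sigma_k >= ln Sigma_(k+1) - ln Sigma_k] shows
   that [sum_(k<=n) f_k/k] increases at rate at least [gam ln n] on [[b, beta]]
   whenever [Sigma_n(b) > n^gam] infinitely often; its Cesaro mean against the
   harmonic numbers tends to [f(beta)], which is therefore at least [beta - b]. *)

From Stdlib Require Import Reals Lra Lia Classical.
From Coquelicot Require Import Coquelicot.
Open Scope R_scope.

Lemma has_deriv_on_sub lo hi a b g g' :
  has_deriv_on lo hi g g' -> lo <= a -> b <= hi -> has_deriv_on a b g g'.
Proof.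
  intros Hg Hlo Hhi x Hx eps Heps.
  destruct (Hg x ltac:(lra) eps Heps) as [d [Hd Hq]].
  exists d; split; [exact Hd|]. intros y Hy. apply Hq; lra.
Qed.

Lemma Rabs_mult_le_div u v e K : 0 < K -> Rabs u <= e / K -> Rabs v <= K ->
  Rabs (u * v) <= e.
Proof.
  intros HK Hu Hv. rewrite Rabs_mult.
  replace e with (e / K * K) by (field; lra).
  apply Rmult_le_compat; [apply Rabs_pos| apply Rabs_pos| exact Hu| exact Hv].
Qed.

Section DerivOn.
Variables a b : R.

Lemma has_deriv_on_continuous g g' x : has_deriv_on a b g g' -> a <= x <= b ->
  forall eps, 0 < eps -> exists delta, 0 < delta /\
    forall y, a <= y <= b -> Rabs (y - x) < delta -> Rabs (g y - g x) < eps.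
Proof.
  intros Hg Hx eps Heps.
  destruct (Hg x Hx 1 Rlt_0_1) as [d [Hd Hq]].
  set (K := Rabs (g' x) + 1).
  assert (HK : 0 < K) by (unfold K; pose proof (Rabs_pos (g' x)); lra).
  exists (Rmin d (eps / K)); split.
  { apply Rmin_glb_lt; [lra| apply Rdiv_lt_0_compat; lra]. }
  intros y Hy Hyx.
  destruct (Req_dec y x) as [->|Hne].
  { rewrite Rminus_eq_0, Rabs_R0; lra. }
  pose proof (Rmin_l d (eps / K)); pose proof (Rmin_r d (eps / K)).
  set (q := (g y - g x) / (y - x)) in Hq.
  assert (Hquot : Rabs (q - g' x) < 1) by (apply Hq; auto; lra).
  assert (Hqx : Rabs q <= K).
  { unfold K. replace q with ((q - g' x) + g' x) by ring.
    pose proof (Rabs_triang (q - g' x) (g' x)); lra. }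
  replace (g y - g x) with (q * (y - x)) by (unfold q; field; lra).
  rewrite Rabs_mult.
  assert (Rabs (y - x) * K < eps / K * K) by (apply Rmult_lt_compat_r; lra).
  replace (eps / K * K) with eps in * by (field; lra).
  pose proof (Rabs_pos q); pose proof (Rabs_pos (y - x)). nra.
Qed.

Lemma has_deriv_on_is_derive g g' x : has_deriv_on a b g g' -> a < x < b ->
  is_derive g x (g' x).
Proof.
  intros Hg Hx. apply is_derive_Reals. intros eps Heps.
  destruct (Hg x ltac:(lra) eps Heps) as [d [Hd Hq]].
  assert (Hp : 0 < Rmin d (Rmin (x - a) (b - x))) by (repeat apply Rmin_glb_lt; lra).
  exists (mkposreal _ Hp). simpl. intros h Hh0 Hh.
  pose proof (Rmin_l d (Rmin (x - a) (b - x))).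
  pose proof (Rmin_r d (Rmin (x - a) (b - x))).
  pose proof (Rmin_l (x - a) (b - x)); pose proof (Rmin_r (x - a) (b - x)).
  apply Rabs_def2 in Hh as Hh'.
  specialize (Hq (x + h) ltac:(lra) ltac:(lra)).
  replace (x + h - x) with h in Hq by ring. apply Hq. lra.
Qed.

Lemma is_derive_has_deriv_on g g' :
  (forall x, is_derive g x (g' x)) -> has_deriv_on a b g g'.
Proof.
  intros Hg x _ eps Heps.
  destruct (proj1 (is_derive_Reals g x (g' x)) (Hg x) eps Heps) as [d Hd].
  exists d; split; [apply cond_pos|].
  intros y _ Hyx Hy.
  specialize (Hd (y - x) ltac:(lra) Hy).
  replace (x + (y - x)) with y in Hd by ring. exact Hd.
Qed.

Lemma has_deriv_on_ext g g1 g2 : has_deriv_on a b g g1 ->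
  (forall x, a <= x <= b -> g1 x = g2 x) -> has_deriv_on a b g g2.
Proof. intros Hg E x Hx. rewrite <- (E x Hx). exact (Hg x Hx). Qed.

Lemma has_deriv_on_plus g g' h h' : has_deriv_on a b g g' -> has_deriv_on a b h h' ->
  has_deriv_on a b (fun y => g y + h y) (fun y => g' y + h' y).
Proof.
  intros Hg Hh x Hx eps Heps.
  destruct (Hg x Hx (eps / 2) ltac:(lra)) as [d1 [Hd1 H1]].
  destruct (Hh x Hx (eps / 2) ltac:(lra)) as [d2 [Hd2 H2]].
  exists (Rmin d1 d2); split; [apply Rmin_glb_lt; lra|].
  intros y Hy Hne Hyx.
  pose proof (Rmin_l d1 d2); pose proof (Rmin_r d1 d2).
  specialize (H1 y Hy Hne ltac:(lra)); specialize (H2 y Hy Hne ltac:(lra)).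
  replace ((g y + h y - (g x + h x)) / (y - x) - (g' x + h' x)) with
    (((g y - g x) / (y - x) - g' x) + ((h y - h x) / (y - x) - h' x)) by (field; lra).
  eapply Rle_lt_trans; [apply Rabs_triang| lra].
Qed.

Lemma has_deriv_on_mult g g' h h' : has_deriv_on a b g g' -> has_deriv_on a b h h' ->
  has_deriv_on a b (fun y => g y * h y) (fun y => g' y * h y + g y * h' y).
Proof.
  intros Hg Hh x Hx eps Heps.
  set (A := Rabs (h x) + 1); set (B := Rabs (g' x) + 1); set (C := Rabs (g x) + 1).
  assert (HA : 0 < A) by (unfold A; pose proof (Rabs_pos (h x)); lra).
  assert (HB : 0 < B) by (unfold B; pose proof (Rabs_pos (g' x)); lra).
  assert (HC : 0 < C) by (unfold C; pose proof (Rabs_pos (g x)); lra).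
  set (e := eps / 4).
  assert (He : 0 < e) by (unfold e; lra).
  destruct (Hg x Hx (e / A)) as [d1 [Hd1 H1]]; [apply Rdiv_lt_0_compat; lra|].
  destruct (has_deriv_on_continuous h h' x Hh Hx (Rmin 1 (e / B))) as [d2 [Hd2 H2]].
  { apply Rmin_glb_lt; [lra| apply Rdiv_lt_0_compat; lra]. }
  destruct (Hh x Hx (e / C)) as [d3 [Hd3 H3]]; [apply Rdiv_lt_0_compat; lra|].
  exists (Rmin d1 (Rmin d2 d3)); split; [repeat apply Rmin_glb_lt; lra|].
  intros y Hy Hne Hyx.
  pose proof (Rmin_l d1 (Rmin d2 d3)); pose proof (Rmin_r d1 (Rmin d2 d3)).
  pose proof (Rmin_l d2 d3); pose proof (Rmin_r d2 d3).
  pose proof (Rmin_l 1 (e / B)); pose proof (Rmin_r 1 (e / B)).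
  specialize (H1 y Hy Hne ltac:(lra)); specialize (H2 y Hy ltac:(lra));
    specialize (H3 y Hy Hne ltac:(lra)).
  set (qg := (g y - g x) / (y - x) - g' x) in H1.
  set (qh := (h y - h x) / (y - x) - h' x) in H3.
  replace ((g y * h y - g x * h x) / (y - x) - (g' x * h x + g x * h' x)) with
    (qg * h y + ((h y - h x) * g' x + qh * g x)) by (unfold qg, qh; field; lra).
  assert (Hhy : Rabs (h y) <= A).
  { unfold A. replace (h y) with ((h y - h x) + h x) by ring.
    pose proof (Rabs_triang (h y - h x) (h x)); lra. }
  pose proof (Rabs_mult_le_div qg (h y) e A HA ltac:(lra) Hhy).
  pose proof (Rabs_mult_le_div (h y - h x) (g' x) e B HB ltac:(lra) ltac:(unfold B; lra)).
  pose proof (Rabs_mult_le_div qh (g x) e C HC ltac:(lra) ltac:(unfold C; lra)).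
  pose proof (Rabs_triang (qg * h y) ((h y - h x) * g' x + qh * g x)).
  pose proof (Rabs_triang ((h y - h x) * g' x) (qh * g x)).
  unfold e in *. lra.
Qed.

Lemma has_deriv_on_scal g g' k : has_deriv_on a b g g' ->
  has_deriv_on a b (fun y => k * g y) (fun y => k * g' y).
Proof.
  intros Hg.
  apply has_deriv_on_ext with (fun y => 0 * g y + k * g' y); [|intros; ring].
  apply has_deriv_on_mult; [|exact Hg].
  apply is_derive_has_deriv_on. intros x. auto_derive; [exact I| ring].
Qed.

Lemma has_deriv_on_sum (g g' : nat -> R -> R) n :
  (forall k, has_deriv_on a b (g k) (g' k)) ->
  has_deriv_on a b (fun x => sum_f_R0 (fun k => g k x) n)
    (fun x => sum_f_R0 (fun k => g' k x) n).
Proof.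
  intros Hg. induction n as [|n IH]; simpl; [apply Hg|].
  apply has_deriv_on_plus; [exact IH| apply Hg].
Qed.

Lemma has_deriv_on_nonneg_le h h' : a <= b -> has_deriv_on a b h h' ->
  (forall x, a <= x <= b -> 0 <= h' x) -> h a <= h b.
Proof.
  intros Hab Hh Hpos.
  destruct (Req_dec a b) as [<-|Hne]; [lra|].
  assert (Hinner : forall x y, a < x -> x < y -> y < b -> h x <= h y).
  { intros x y Hx Hxy Hy.
    destruct (MVT_gen h x y h') as [c [Hc Heq]];
      rewrite ?Rmin_left, ?Rmax_right in * by lra.
    - intros z Hz. apply (has_deriv_on_is_derive h h'); auto; lra.
    - intros z Hz. apply continuity_pt_filterlim, (ex_derive_continuous (V := R_NormedModule)).
      exists (h' z). apply (has_deriv_on_is_derive h h'); auto; lra.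
    - pose proof (Hpos c ltac:(lra)). nra. }
  apply Rle_plus_epsilon. intros eps Heps.
  destruct (has_deriv_on_continuous h h' a Hh ltac:(lra) (eps / 2) ltac:(lra))
    as [da [Hda Ha]].
  destruct (has_deriv_on_continuous h h' b Hh ltac:(lra) (eps / 2) ltac:(lra))
    as [db [Hdb Hb]].
  set (m := Rmin (Rmin da db) ((b - a) / 4)).
  assert (Hm : 0 < m) by (unfold m; repeat apply Rmin_glb_lt; lra).
  assert (Hma : m <= da) by (unfold m; eapply Rle_trans; apply Rmin_l).
  assert (Hmb : m <= db) by (unfold m; eapply Rle_trans; [apply Rmin_l| apply Rmin_r]).
  assert (Hmab : m <= (b - a) / 4) by apply Rmin_r.
  specialize (Ha (a + m / 2) ltac:(lra) ltac:(rewrite Rabs_right; lra)).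
  specialize (Hb (b - m / 2) ltac:(lra) ltac:(rewrite Rabs_left; lra)).
  apply Rabs_def2 in Ha; apply Rabs_def2 in Hb.
  pose proof (Hinner (a + m / 2) (b - m / 2) ltac:(lra) ltac:(lra) ltac:(lra)).
  lra.
Qed.

Lemma has_deriv_on_linear_growth g g' K : a <= b -> has_deriv_on a b g g' ->
  (forall x, a <= x <= b -> K <= g' x) -> g a + K * (b - a) <= g b.
Proof.
  intros Hab Hg HK.
  assert (Hshift : has_deriv_on a b (fun y => g y + - K * y) (fun y => g' y + - K)).
  { apply has_deriv_on_plus; [exact Hg|].
    apply is_derive_has_deriv_on. intros x. auto_derive; [exact I| ring]. }
  enough (g a + - K * a <= g b + - K * b) by lra.
  apply (has_deriv_on_nonneg_le _ _ Hab Hshift).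
  intros x Hx. specialize (HK x Hx). lra.
Qed.

Lemma has_deriv_on_exp_growth g g' c : a <= b -> has_deriv_on a b g g' ->
  (forall x, a <= x <= b -> c * g x <= g' x) -> g a * exp (c * (b - a)) <= g b.
Proof.
  intros Hab Hg Hc.
  assert (Hdamp : has_deriv_on a b (fun y => g y * exp (- c * y))
                    (fun y => g' y * exp (- c * y) + g y * (- c * exp (- c * y)))).
  { apply has_deriv_on_mult; [exact Hg|].
    apply is_derive_has_deriv_on. intros x. auto_derive; [exact I| ring]. }
  assert (Hle : g a * exp (- c * a) <= g b * exp (- c * b)).
  { apply (has_deriv_on_nonneg_le _ _ Hab Hdamp).
    intros x Hx. specialize (Hc x Hx). pose proof (exp_pos (- c * x)). nra. }
  apply Rmult_le_compat_r with (r := exp (c * b)) in Hle; [| left; apply exp_pos].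
  rewrite !Rmult_assoc, <- !exp_plus in Hle.
  replace (- c * b + c * b) with 0 in Hle by ring.
  rewrite exp_0, Rmult_1_r in Hle.
  replace (c * (b - a)) with (- c * a + c * b) by ring. exact Hle.
Qed.

End DerivOn.

Lemma exp_le_compat x y : x <= y -> exp x <= exp y.
Proof. intros [Hlt| ->]; [left; apply exp_increasing, Hlt| right; reflexivity]. Qed.

Lemma ln_sub_le_div x y : 0 < x -> 0 < y -> ln y - ln x <= (y - x) / x.
Proof.
  intros Hx Hy. pose proof (exp_ineq1_le (ln y - ln x)) as H.
  unfold Rminus at 2 in H. rewrite exp_plus, exp_Ropp, !exp_ln in H by assumption.
  replace ((y - x) / x) with (y * / x - 1) by (field; lra). lra.
Qed.

(* [c d >= d (eps L / 2)^2 >= 2 L] for [L = ln n], since [c >= exp (eps L)]. *)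
Lemma square_le_exp_mul n c d eps : 0 < n -> 0 < c -> 0 < d -> 0 < eps ->
  8 / (d * eps ^ 2) <= ln n -> eps * ln n <= ln c -> n * n <= exp (c * d).
Proof.
  intros Hn Hc Hd Heps HL Hlc.
  set (L := ln n) in *.
  assert (Hde : 0 < d * eps ^ 2) by (apply Rmult_lt_0_compat; [lra| apply pow_lt; lra]).
  assert (HL8 : 8 <= d * eps ^ 2 * L).
  { replace 8 with (d * eps ^ 2 * (8 / (d * eps ^ 2))) by (field; lra).
    apply Rmult_le_compat_l; lra. }
  assert (HL0 : 0 < L) by nra.
  assert (Hsq : (eps * L / 2) * (eps * L / 2) <= c).
  { rewrite <- (exp_ln c) by exact Hc.
    apply Rle_trans with (exp (eps * L / 2) * exp (eps * L / 2)).
    - pose proof (exp_ineq1_le (eps * L / 2)). apply Rmult_le_compat; nra.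
    - rewrite <- exp_plus. apply exp_le_compat. lra. }
  assert (Hcd : 2 * L <= c * d).
  { assert (Hdc : d * ((eps * L / 2) * (eps * L / 2)) <= d * c)
      by (apply Rmult_le_compat_l; lra).
    assert (8 * L <= d * eps ^ 2 * L * L) by (apply Rmult_le_compat_r; lra).
    replace (d * ((eps * L / 2) * (eps * L / 2))) with (d * eps ^ 2 * L * L / 4)
      in Hdc by field.
    lra. }
  replace (n * n) with (exp (2 * L)).
  - apply exp_le_compat. exact Hcd.
  - replace (2 * L) with (L + L) by ring. unfold L. rewrite exp_plus, exp_ln; auto.
Qed.

Definition harmonic (n : nat) : R := sum_f_R0 (fun k => / INR (S k)) n.

Lemma ln_le_harmonic n : ln (INR (S (S n))) <= harmonic n.
Proof.
  induction n as [|n IH].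
  - unfold harmonic; simpl.
    pose proof (ln_sub_le_div 1 (1 + 1) Rlt_0_1 ltac:(lra)). rewrite ln_1 in H. lra.
  - change (harmonic (S n)) with (harmonic n + / INR (S (S n))).
    assert (Hpos : 0 < INR (S (S n))) by (apply lt_0_INR; lia).
    pose proof (ln_sub_le_div (INR (S (S n))) (INR (S (S (S n)))) Hpos
                  ltac:(apply lt_0_INR; lia)) as Hstep.
    rewrite (S_INR (S (S n))) in Hstep at 2.
    replace ((INR (S (S n)) + 1 - INR (S (S n))) / INR (S (S n))) with (/ INR (S (S n)))
      in Hstep by (field; lra).
    lra.
Qed.

Lemma harmonic_le_ln n : harmonic n <= 1 + ln (INR (S n)).
Proof.
  induction n as [|n IH].
  - unfold harmonic; simpl. rewrite ln_1. lra.
  - change (harmonic (S n)) with (harmonic n + / INR (S (S n))).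
    assert (Hpos : 0 < INR (S (S n))) by (apply lt_0_INR; lia).
    pose proof (ln_sub_le_div (INR (S (S n))) (INR (S n)) Hpos
                  ltac:(apply lt_0_INR; lia)) as Hstep.
    replace ((INR (S n) - INR (S (S n))) / INR (S (S n))) with (- / INR (S (S n)))
      in Hstep by (rewrite (S_INR (S n)); pose proof (pos_INR (S n)); field; lra).
    lra.
Qed.

Lemma harmonic_mean_cv (u : nat -> R) l : Un_cv u l ->
  Un_cv (fun n => sum_f_R0 (fun k => / INR (S k) * u (S k)) n / harmonic n) l.
Proof.
  intros Hu. apply (Cesaro (fun k => / INR (S k)) (fun k => u (S k))).
  - intros eps Heps. destruct (Hu eps Heps) as [N HN].
    exists N. intros n Hn. apply HN. lia.
  - intros n. apply Rinv_0_lt_compat, lt_0_INR. lia.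
  - intros A. destruct (INR_archimed 1 (exp A) Rlt_0_1) as [N HN].
    exists N. intros n Hn. fold (harmonic n).
    eapply Rlt_le_trans; [| apply ln_le_harmonic].
    rewrite <- (ln_exp A). apply ln_increasing; [apply exp_pos|].
    assert (INR N <= INR (S (S n))) by (apply le_INR; lia). lra.
Qed.

Lemma Un_cv_ge_of_frequently (u : nat -> R) l v : Un_cv u l ->
  (forall N, exists n, (N <= n)%nat /\ v <= u n) -> v <= l.
Proof.
  intros Hu Hfreq. apply Rnot_lt_le. intros Hlt.
  destruct (Hu (v - l) ltac:(lra)) as [N HN].
  destruct (Hfreq N) as [n [Hn Hv]].
  specialize (HN n Hn). unfold R_dist in HN. apply Rabs_def2 in HN. lra.
Qed.

Lemma le_of_forall_mul_le d l : 0 < d ->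
  (forall gam, 0 <= gam < 1 -> gam * d <= l) -> d <= l.
Proof.
  intros Hd H. apply Rnot_lt_le. intros Hlt.
  pose proof (H 0 ltac:(lra)) as Hl0.
  assert (Hld : 0 <= l / d < 1).
  { split; [apply Rdiv_le_0_compat; lra|].
    apply Rmult_lt_reg_r with d; [exact Hd|].
    unfold Rdiv. rewrite Rmult_assoc, Rinv_l; lra. }
  pose proof (H ((1 + l / d) / 2) ltac:(lra)) as Hhalf.
  replace ((1 + l / d) / 2 * d) with ((d + l) / 2) in Hhalf by (field; lra).
  lra.
Qed.

Definition weighted_sum (g : nat -> R -> R) (n : nat) (x : R) : R :=
  sum_f_R0 (fun k => / INR (S k) * g (S k) x) n.

Section DifferentialInequality.
Variables (beta0 M : R) (f f' : nat -> R -> R).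
Hypothesis f_incr : forall n x y, 0 <= x -> x <= y -> y <= beta0 -> f n x <= f n y.
Hypothesis f_deriv : forall n, has_deriv_on 0 beta0 (f n) (f' n).
Hypothesis f_bounds : forall n x, 0 <= x <= beta0 -> 0 <= f n x <= M.
Hypothesis f_ineq : forall n x, (1 <= n)%nat -> 0 <= x <= beta0 ->
  0 < Sigma f n x /\ f' n x >= INR n / Sigma f n x * f n x.

Lemma Sigma_le n x : 0 <= x <= beta0 -> Sigma f n x <= INR n * M.
Proof.
  intros Hx. induction n as [|n IH]; [simpl; lra|].
  cbn [Sigma]. rewrite S_INR. pose proof (f_bounds n x Hx). lra.
Qed.

Lemma Sigma_le_x n x y : 0 <= x -> x <= y -> y <= beta0 -> Sigma f n x <= Sigma f n y.
Proof.
  intros Hx Hxy Hy. induction n as [|n IH]; simpl; [lra|].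
  pose proof (f_incr n x y Hx Hxy Hy). lra.
Qed.

Lemma Sigma_le_n n m x : 0 <= x <= beta0 -> (n <= m)%nat -> Sigma f n x <= Sigma f m x.
Proof.
  intros Hx Hnm. induction Hnm as [|m _ IH]; simpl; [lra|].
  pose proof (f_bounds m x Hx). lra.
Qed.

Lemma f_exp_growth n x b : (1 <= n)%nat -> 0 <= x <= b -> b <= beta0 ->
  f n x * exp (INR n / Sigma f n b * (b - x)) <= f n b.
Proof.
  intros Hn Hx Hb.
  apply (has_deriv_on_exp_growth x b (f n) (f' n)); [lra| |].
  { apply (has_deriv_on_sub 0 beta0); [apply f_deriv| lra| lra]. }
  intros y Hy.
  destruct (f_ineq n y Hn ltac:(lra)) as [HSy Hf'].
  destruct (f_ineq n b Hn ltac:(lra)) as [HSb _].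
  pose proof (Sigma_le_x n y b ltac:(lra) ltac:(lra) Hb).
  pose proof (f_bounds n y ltac:(lra)).
  apply Rle_trans with (INR n / Sigma f n y * f n y); [|lra].
  apply Rmult_le_compat_r; [lra|].
  unfold Rdiv. apply Rmult_le_compat_l; [apply pos_INR|].
  apply Rinv_le_contravar; lra.
Qed.

Lemma exp_decay_of_Sigma_bounded beta b C : 0 <= beta < b -> b <= beta0 ->
  (forall n, (1 <= n)%nat -> Sigma f n b <= C) ->
  exists c, 0 < c /\ exists N : nat, forall n : nat, (N <= n)%nat ->
    f n beta <= exp (- (c * INR n)).
Proof.
  intros Hbeta Hb HC.
  assert (HC0 : 0 < C).
  { pose proof (HC 1%nat (le_n 1)). pose proof (f_ineq 1 b (le_n 1) ltac:(lra)). lra. }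
  set (c := (b - beta) / (2 * C)).
  assert (Hc : 0 < c) by (unfold c; apply Rdiv_lt_0_compat; lra).
  exists c; split; [exact Hc|].
  destruct (INR_archimed c M Hc) as [N HN].
  exists (Nat.max N 1). intros n Hn.
  assert (Hn1 : (1 <= n)%nat) by lia.
  assert (HnN : INR N <= INR n) by (apply le_INR; lia).
  destruct (f_ineq n b Hn1 ltac:(lra)) as [HSb _].
  assert (Hrate : 2 * (c * INR n) <= INR n / Sigma f n b * (b - beta)).
  { replace (2 * (c * INR n)) with (INR n / C * (b - beta)) by (unfold c; field; lra).
    apply Rmult_le_compat_r; [lra|].
    unfold Rdiv. apply Rmult_le_compat_l; [apply pos_INR|].
    apply Rinv_le_contravar; [lra| exact (HC n Hn1)]. }
  pose proof (f_exp_growth n beta b Hn1 ltac:(lra) Hb) as Hgrowth.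
  pose proof (f_bounds n beta ltac:(lra)); pose proof (f_bounds n b ltac:(lra)).
  set (E := exp (c * INR n)).
  assert (HEM : M < E).
  { unfold E. pose proof (exp_ineq1_le (c * INR n)).
    assert (c * INR N <= c * INR n) by (apply Rmult_le_compat_l; lra). lra. }
  assert (HE2 : E * E <= exp (INR n / Sigma f n b * (b - beta))).
  { unfold E. rewrite <- exp_plus. apply exp_le_compat. lra. }
  assert (HfE : f n beta * (E * E) < E).
  { apply Rle_lt_trans with M; [|exact HEM].
    apply Rle_trans with (f n beta * exp (INR n / Sigma f n b * (b - beta))); [|lra].
    apply Rmult_le_compat_l; lra. }
  assert (HE0 : 0 < E) by apply exp_pos.
  rewrite exp_Ropp. fold E.
  apply Rmult_le_reg_r with E; [exact HE0|].
  rewrite Rinv_l by lra. nra.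
Qed.

Definition Sigma_subpower (x : R) : Prop :=
  exists gam, gam < 1 /\ exists N : nat, forall n, (N <= n)%nat ->
    ln (Sigma f n x) <= gam * ln (INR n).

Lemma f_le_inverse_square x b : Sigma_subpower b -> 0 <= x < b -> b <= beta0 ->
  exists K, (1 <= K)%nat /\ forall n, (K <= n)%nat -> f n x * (INR n * INR n) <= M.
Proof.
  intros [gam [Hgam [N HN]]] Hx Hb.
  set (d := b - x); set (eps := 1 - gam).
  destruct (INR_archimed 1 (exp (8 / (d * eps ^ 2))) Rlt_0_1) as [N2 HN2].
  exists (Nat.max N2 (Nat.max N 1)). split; [lia|]. intros n Hn.
  assert (Hn1 : (1 <= n)%nat) by lia.
  assert (Hnpos : 0 < INR n) by (apply lt_0_INR; lia).
  destruct (f_ineq n b Hn1 ltac:(lra)) as [HSb _].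
  assert (Hrate : 0 < INR n / Sigma f n b) by (apply Rdiv_lt_0_compat; lra).
  assert (Hln : 8 / (d * eps ^ 2) <= ln (INR n)).
  { rewrite <- (ln_exp (8 / (d * eps ^ 2))). apply ln_le; [apply exp_pos|].
    assert (INR N2 <= INR n) by (apply le_INR; lia). lra. }
  assert (Hlnrate : eps * ln (INR n) <= ln (INR n / Sigma f n b)).
  { rewrite ln_div by lra. pose proof (HN n ltac:(lia)). unfold eps. lra. }
  pose proof (square_le_exp_mul (INR n) (INR n / Sigma f n b) d eps Hnpos Hrate
                ltac:(unfold d; lra) ltac:(unfold eps; lra) Hln Hlnrate).
  pose proof (f_exp_growth n x b Hn1 ltac:(lra) Hb).
  pose proof (f_bounds n x ltac:(lra)); pose proof (f_bounds n b ltac:(lra)).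
  apply Rle_trans with (f n x * exp (INR n / Sigma f n b * d)); [|unfold d; lra].
  apply Rmult_le_compat_l; lra.
Qed.

(* Telescoping: [M / m^2 <= 2 M (1/m - 1/(m+1))] for [m >= 1]. *)
Lemma Sigma_bounded_of_inverse_square x K : 0 <= x <= beta0 -> (1 <= K)%nat ->
  (forall n, (K <= n)%nat -> f n x * (INR n * INR n) <= M) ->
  forall n, Sigma f n x <= INR K * M + 2 * M.
Proof.
  intros Hx HK Hsq.
  assert (HM : 0 <= M) by (pose proof (f_bounds 0 x Hx); lra).
  assert (HK1 : 1 <= INR K) by (apply (le_INR 1); exact HK).
  assert (Htail : forall k, Sigma f (K + k) x <= INR K * M + 2 * M * (/ INR K - / INR (K + k))).
  { induction k as [|k IH].
    - rewrite Nat.add_0_r, Rminus_eq_0. pose proof (Sigma_le K x Hx). lra.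
    - rewrite Nat.add_succ_r. simpl Sigma. rewrite S_INR.
      set (m := INR (K + k)) in *.
      assert (Hm1 : 1 <= m) by (unfold m; apply (le_INR 1); lia).
      pose proof (Hsq (K + k)%nat ltac:(lia)) as Hfm. fold m in Hfm.
      pose proof (f_bounds (K + k) x Hx).
      assert (f (K + k)%nat x <= 2 * M * (/ m - / (m + 1))).
      { replace (2 * M * (/ m - / (m + 1))) with (2 * M / (m * (m + 1))) by (field; lra).
        apply Rmult_le_reg_r with (m * (m + 1)); [nra|].
        unfold Rdiv. rewrite Rmult_assoc, Rinv_l by nra. nra. }
      lra. }
  intros n. destruct (Nat.le_gt_cases K n) as [Hle|Hlt].
  - replace n with (K + (n - K))%nat by lia.
    pose proof (Htail (n - K)%nat).
    assert (0 < / INR (K + (n - K))) by (apply Rinv_0_lt_compat, lt_0_INR; lia).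
    assert (/ INR K <= 1) by (rewrite <- Rinv_1; apply Rinv_le_contravar; lra).
    nra.
  - pose proof (Sigma_le n x Hx).
    assert (INR n <= INR K) by (apply le_INR; lia). nra.
Qed.

Lemma exp_decay_below_subpower beta b : Sigma_subpower b -> 0 <= beta < b -> b <= beta0 ->
  exists c, 0 < c /\ exists N : nat, forall n : nat, (N <= n)%nat ->
    f n beta <= exp (- (c * INR n)).
Proof.
  intros Hsub Hbeta Hb.
  set (mid := (beta + b) / 2).
  destruct (f_le_inverse_square mid b Hsub ltac:(unfold mid; lra) Hb) as [K [HK Hsq]].
  apply (exp_decay_of_Sigma_bounded beta mid (INR K * M + 2 * M));
    [unfold mid; lra| unfold mid; lra|].
  intros n _. apply (Sigma_bounded_of_inverse_square mid K); auto. unfold mid; lra.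
Qed.

Lemma weighted_sum_nonneg n x : 0 <= x <= beta0 -> 0 <= weighted_sum f n x.
Proof.
  intros Hx. unfold weighted_sum. apply cond_pos_sum. intros k.
  pose proof (f_bounds (S k) x Hx).
  assert (0 < / INR (S k)) by (apply Rinv_0_lt_compat, lt_0_INR; lia). nra.
Qed.

(* [ln Sigma_(m+1) - ln Sigma_m <= f_m / Sigma_m <= f_m' / m]. *)
Lemma ln_Sigma_step m x : (1 <= m)%nat -> 0 <= x <= beta0 ->
  ln (Sigma f (S m) x) - ln (Sigma f m x) <= / INR m * f' m x.
Proof.
  intros Hm Hx.
  destruct (f_ineq m x Hm Hx) as [HS Hf'].
  destruct (f_ineq (S m) x ltac:(lia) Hx) as [HS' _].
  eapply Rle_trans; [apply ln_sub_le_div; assumption|].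
  change (Sigma f (S m) x) with (Sigma f m x + f m x).
  assert (Hmpos : 0 < INR m) by (apply lt_0_INR; lia).
  replace ((Sigma f m x + f m x - Sigma f m x) / Sigma f m x)
    with (/ INR m * (INR m / Sigma f m x * f m x)) by (field; lra).
  apply Rmult_le_compat_l; [left; apply Rinv_0_lt_compat, Hmpos| lra].
Qed.

Lemma ln_Sigma_le_weighted_deriv n x : 0 <= x <= beta0 ->
  ln (Sigma f (S (S n)) x) - ln (Sigma f 1 x) <= weighted_sum f' n x.
Proof.
  intros Hx. unfold weighted_sum. induction n as [|n IH].
  - apply ln_Sigma_step; [lia| exact Hx].
  - rewrite tech5. pose proof (ln_Sigma_step (S (S n)) x ltac:(lia) Hx). lra.
Qed.

Lemma weighted_sum_growth n x beta : 0 <= x <= beta -> beta <= beta0 ->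
  (ln (Sigma f (S n) x) - ln M) * (beta - x) <= weighted_sum f n beta.
Proof.
  intros Hx Hbeta.
  assert (Hderiv : has_deriv_on x beta (weighted_sum f n) (weighted_sum f' n)).
  { apply (has_deriv_on_sub 0 beta0); [|lra| lra].
    apply (has_deriv_on_sum 0 beta0 (fun k y => / INR (S k) * f (S k) y)).
    intros k. apply has_deriv_on_scal, f_deriv. }
  pose proof (has_deriv_on_linear_growth x beta _ _ (ln (Sigma f (S n) x) - ln M)
                ltac:(lra) Hderiv) as Hgrowth.
  pose proof (weighted_sum_nonneg n x ltac:(lra)).
  enough (weighted_sum f n x + (ln (Sigma f (S n) x) - ln M) * (beta - x)
            <= weighted_sum f n beta) by lra.
  apply Hgrowth. intros y Hy.
  pose proof (ln_Sigma_le_weighted_deriv n y ltac:(lra)).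
  destruct (f_ineq (S n) x ltac:(lia) ltac:(lra)) as [HSx _].
  destruct (f_ineq 1 y (le_n 1) ltac:(lra)) as [HS1 _].
  pose proof (Sigma_le_x (S n) x y ltac:(lra) ltac:(lra) ltac:(lra)).
  pose proof (Sigma_le_n (S n) (S (S n)) y ltac:(lra) ltac:(lia)).
  assert (ln (Sigma f (S n) x) <= ln (Sigma f (S (S n)) y)) by (apply ln_le; lra).
  assert (Sigma f 1 y <= M) by (simpl; pose proof (f_bounds 0 y ltac:(lra)); lra).
  assert (ln (Sigma f 1 y) <= ln M) by (apply ln_le; lra).
  lra.
Qed.

Lemma weighted_mean_ge_frequently x beta gam : ~ Sigma_subpower x -> 0 <= x < beta ->
  beta <= beta0 -> 0 <= gam < 1 ->
  forall N, exists n, (N <= n)%nat /\ gam * (beta - x) <= weighted_sum f n beta / harmonic n.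
Proof.
  intros Hnot Hx Hbeta Hgam N.
  set (gam' := (1 + gam) / 2).
  assert (Hfreq : forall N, exists n, (N <= n)%nat /\ gam' * ln (INR n) < ln (Sigma f n x)).
  { intros N'. apply NNPP. intros Hno. apply Hnot.
    exists gam'. split; [unfold gam'; lra|]. exists N'. intros n Hn.
    apply Rnot_lt_le. intros Hlt. apply Hno. exists n. split; assumption. }
  (* Past [L1], the margin [(gam' - gam) ln n] absorbs [gam + ln M]. *)
  set (L1 := (gam + ln M) / (gam' - gam)).
  destruct (INR_archimed 1 (exp L1) Rlt_0_1) as [N1 HN1].
  destruct (Hfreq (Nat.max (S N) (Nat.max N1 1))) as [[|n] [Hn Hbig]]; [lia|].
  exists n. split; [lia|].
  set (L := ln (INR (S n))) in Hbig.
  assert (HL : L1 <= L).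
  { unfold L. rewrite <- (ln_exp L1). apply ln_le; [apply exp_pos|].
    assert (INR N1 <= INR (S n)) by (apply le_INR; lia). lra. }
  assert (HK : gam * (1 + L) <= ln (Sigma f (S n) x) - ln M).
  { assert (Hmargin : (gam' - gam) * L1 <= (gam' - gam) * L)
      by (apply Rmult_le_compat_l; unfold gam'; lra).
    replace ((gam' - gam) * L1) with (gam + ln M) in Hmargin
      by (unfold L1, gam'; field; lra).
    unfold gam' in *. lra. }
  pose proof (weighted_sum_growth n x beta ltac:(lra) Hbeta) as Hgrowth.
  pose proof (harmonic_le_ln n) as Hup. fold L in Hup.
  assert (Hhpos : 0 < harmonic n).
  { eapply Rlt_le_trans; [| apply ln_le_harmonic].
    rewrite <- ln_1. apply ln_increasing; [lra|].
    rewrite !S_INR. pose proof (pos_INR n). lra. }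
  apply Rmult_le_reg_r with (harmonic n); [exact Hhpos|].
  replace (weighted_sum f n beta / harmonic n * harmonic n) with (weighted_sum f n beta)
    by (field; lra).
  apply Rle_trans with (gam * (beta - x) * (1 + L)).
  - apply Rmult_le_compat_l; [apply Rmult_le_pos; lra| exact Hup].
  - apply Rle_trans with ((ln (Sigma f (S n) x) - ln M) * (beta - x)); [|exact Hgrowth].
    replace (gam * (beta - x) * (1 + L)) with (gam * (1 + L) * (beta - x)) by ring.
    apply Rmult_le_compat_r; lra.
Qed.

Lemma limit_ge_of_not_subpower x beta l : ~ Sigma_subpower x -> 0 <= x < beta ->
  beta <= beta0 -> Un_cv (fun n => f n beta) l -> beta - x <= l.
Proof.
  intros Hnot Hx Hbeta Hl.
  apply le_of_forall_mul_le; [lra|]. intros gam Hgam.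
  apply (Un_cv_ge_of_frequently _ l _ (harmonic_mean_cv (fun n => f n beta) l Hl)).
  exact (weighted_mean_ge_frequently x beta gam Hnot Hx Hbeta Hgam).
Qed.

End DifferentialInequality.

Theorem lemma3p1 (beta0 M : R) (f f' : nat -> R -> R) :
  0 < beta0 -> 0 < M ->
  (forall x, 0 <= x <= beta0 -> exists l, Un_cv (fun n => f n x) l) ->
  (forall n x y, 0 <= x -> x <= y -> y <= beta0 -> f n x <= f n y) ->
  (forall n, has_deriv_on 0 beta0 (f n) (f' n)) ->
  (forall n x, 0 <= x <= beta0 -> 0 <= f n x <= M) ->
  (forall n x, (1 <= n)%nat -> 0 <= x <= beta0 ->
     0 < Sigma f n x /\ f' n x >= INR n / Sigma f n x * f n x) ->
  exists beta1, 0 <= beta1 <= beta0 /\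
    (forall beta, 0 <= beta < beta1 ->
       exists c, 0 < c /\ exists N : nat, forall n : nat, (N <= n)%nat ->
         f n beta <= exp (- (c * INR n))) /\
    (forall beta, beta1 < beta <= beta0 ->
       forall l, Un_cv (fun n => f n beta) l -> l >= beta - beta1).
Proof.
  intros Hbeta0 _ _ Hincr Hderiv Hbounds Hineq.
  set (E := fun x => 0 <= x <= beta0 /\ (x = 0 \/ Sigma_subpower f x)).
  destruct (completeness E) as [beta1 [Hub Hlub]].
  { exists beta0. intros x [Hx _]. lra. }
  { exists 0. split; [lra| now left]. }
  assert (Hbeta1 : 0 <= beta1 <= beta0).
  { split; [apply Hub; split; [lra| now left]|]. apply Hlub. intros x [Hx _]. lra. }
  exists beta1. split; [exact Hbeta1| split].
  - intros beta [Hbeta Hlt].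
    destruct (classic (exists x, E x /\ beta < x)) as [[x [[Hx [->|Hsub]] Hbx]]|Hnone].
    + lra.
    + exact (exp_decay_below_subpower beta0 M f f' Hincr Hderiv Hbounds Hineq
               beta x Hsub (conj Hbeta Hbx) (proj2 Hx)).
    + enough (beta1 <= beta) by lra.
      apply Hlub. intros x Ex. apply Rnot_lt_le. intros Hx. apply Hnone. now exists x.
  - intros beta [Hlt Hbeta] l Hl. apply Rle_ge, Rle_plus_epsilon. intros eps Heps.
    set (t := Rmin eps ((beta - beta1) / 2)).
    assert (Ht : 0 < t) by (apply Rmin_glb_lt; lra).
    assert (Hteps : t <= eps) by apply Rmin_l.
    assert (Htbeta : t <= (beta - beta1) / 2) by apply Rmin_r.
    assert (Hnot : ~ Sigma_subpower f (beta1 + t)).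
    { intros Hsub. enough (beta1 + t <= beta1) by lra.
      apply Hub. split; [lra| now right]. }
    pose proof (limit_ge_of_not_subpower beta0 M f f' Hincr Hderiv Hbounds Hineq
                  (beta1 + t) beta l Hnot ltac:(lra) Hbeta Hl).
    lra.
Qed.
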